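(* Let $k$ be an even positive integer, let $A,B$ be finite subsets of an abelian group, and let $C\subseteq A+B$. Let $\Gamma_C$ be the bipartite graph with vertex classes $A$ and $B$ (taken as disjoint copies) in which $a\in A$ and $b\in B$ are adjacent if and only if $a+b\in C$. Suppose that for every pair $(b,b')\in B\times B$ there are at least $w>0$ walks of length $k$ in $\Gamma_C$ from $b$ to $b'$. Then $|B-B|\le |C|^k/w$.
   Context: For subsets $X,Y$ of an abelian group, $X+Y=\{x+y:x\in X,y\in Y\}$ and $X-Y=\{x-y:x\in X,y\in Y\}$. A walk of length $k$ is a sequence of $k+1$ vertices with consecutive vertices adjacent. *)

From HB Require Import structures.
From mathcomp Require Import all_boot all_order all_algebra.
From mathcomp Require Import finmap.
Set Implicit Arguments. Unset Strict Implicit. Unset Printing Implicit Defensive.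
Import Order.TTheory GRing.Theory Num.Theory.
Local Open Scope fset_scope.
Local Open Scope ring_scope.

Definition sumset (G : zmodType) (A B : {fset G}) : {fset G} :=
  [fset a + b | a in A, b in B].
Definition diffset (G : zmodType) (A B : {fset G}) : {fset G} :=
  [fset a - b | a in A, b in B].

(* Vertices of Gamma_C: disjoint copies of A (inl) and B (inr). *)
Definition gvert (G : zmodType) (A B : {fset G}) : finType := (A + B)%type.

Definition gadj (G : zmodType) (A B C : {fset G}) (u v : gvert A B) : bool :=
  match u, v with
  | inl a, inr b => (val a + val b) \in C
  | inr b, inl a => (val a + val b) \in C
  | _, _ => false
  end.

Definition is_walk (G : zmodType) (A B C : {fset G}) (k : nat)
  (w : k.+1.-tuple (gvert A B)) : bool :=
  path (@gadj G A B C) (thead w) (behead w).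

Definition nwalks (G : zmodType) (A B C : {fset G}) (k : nat)
  (u v : gvert A B) : nat :=
  #|[set w : k.+1.-tuple (gvert A B) |
      [&& @is_walk G A B C k w, thead w == u & last (thead w) (behead w) == v]]|.
Arguments nwalks {G} A B C k u v.

From HB Require Import structures.
From mathcomp Require Import all_boot all_order all_algebra.
From mathcomp Require Import finmap.
Set Implicit Arguments. Unset Strict Implicit. Unset Printing Implicit Defensive.
Import Order.TTheory GRing.Theory Num.Theory.
Local Open Scope fset_scope.
Local Open Scope ring_scope.

(* Label every edge of Gamma_C by the element a + b of C it comes from.  A walk
   is determined by its start and its sequence of labels, and two B-to-B walks
   with the same labels are translates of each other, so they join pairs with
   the same difference.  Choosing for every d in B - B one pair (b, b') with
   b - b' = d, the walks from b to b' (at least w of them each) are therefore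
   injectively encoded by their label sequences in C^k, whence
   |B - B| w <= |C|^k. *)

Lemma card_set_pairs (I J : finType) (P : I -> pred J) :
  #|[set p : I * J | P p.1 p.2]| = (\sum_(i : I) #|[set j | P i j]|)%N.
Proof.
rewrite -sum1_card (eq_bigr (fun i => \sum_(j | P i j) 1)%N); last first.
  by move=> i _; rewrite -sum1_card; apply: eq_bigl => j; rewrite inE.
by rewrite pair_big_dep; apply: eq_bigl => -[i j]; rewrite inE.
Qed.

Lemma card_le_exp_of_inj (T : finType) (K : choiceType) (C : {fset K}) (k : nat)
    (S : {set T}) (f : T -> seq K) :
  {in S &, injective f} ->
  (forall x, x \in S -> size (f x) = k) ->
  (forall x, x \in S -> {subset f x <= C}) ->
  (#|S| <= #|` C| ^ k)%N.
Proof.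
move=> f_inj f_size f_sub.
have [->|[x0 x0S]] := set_0Vmem S; first by rewrite cards0.
have [k0|k_gt0] := posnP k.
  have f_nil x : x \in S -> f x = [::] by move=> xS; apply: size0nil; rewrite f_size.
  rewrite k0 expn0 -(cards1 x0); apply/subset_leq_card/subsetP => x xS.
  by rewrite inE; apply/eqP/f_inj => //; rewrite !f_nil.
have [c0 c0C] : exists c0, c0 \in C.
  have := f_sub x0 x0S; have := f_size x0 x0S.
  case: (f x0) => [/= k_eq0|c s _ sub_C]; first by rewrite -k_eq0 in k_gt0.
  by exists c; rewrite sub_C ?mem_head.
have nth_in_C x i : x \in S -> (i < k)%N -> nth c0 (f x) i \in C.
  by move=> xS ik; apply: (f_sub x xS); rewrite mem_nth ?f_size.
pose F (x : T) : {ffun 'I_k -> C} := [ffun i : 'I_k => insubd [` c0C] (nth c0 (f x) i)].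
have F_inj : {in S &, injective F}.
  move=> x y xS yS eF; apply: f_inj => //.
  apply: (@eq_from_nth _ c0); first by rewrite !f_size.
  move=> i; rewrite f_size // => ik.
  have := congr1 (fun g : {ffun 'I_k -> C} => val (g (Ordinal ik))) eF.
  by rewrite !ffunE !insubdK ?nth_in_C.
rewrite -(card_in_imset F_inj) cardfE -[X in (_ <= _ ^ X)%N](card_ord k) -card_ffun.
exact: max_card.
Qed.

Lemma diffset_section (G : zmodType) (B : {fset G}) :
  exists rep : diffset B B -> B * B,
    forall d, val d = val (rep d).1 - val (rep d).2.
Proof.
have repP (d : diffset B B) : exists bb : B * B, val d == val bb.1 - val bb.2.
  have /imfset2P[x xB [y yB d_eq]] := fsvalP d.
  by exists ([` xB], [` yB]); rewrite /= d_eq.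
by exists (fun d => xchoose (repP d)) => d; apply/eqP; exact: (xchooseP (repP d)).
Qed.

Section LabelledWalks.
Variables (G : zmodType) (A B C : {fset G}).
Local Notation V := (gvert A B).

Definition edge_label (u v : V) : G :=
  match u, v with
  | inl a, inr b | inr b, inl a => val a + val b
  | _, _ => 0
  end.

Definition walk_labels (x : V) (s : seq V) : seq G := pairmap edge_label x s.

Definition tuple_labels (k : nat) (t : k.+1.-tuple V) : seq G :=
  walk_labels (thead t) (behead t).

(* [shifted_by d x x']: x' is the translate of x by -d, where translating the
   B side by -d translates the A side by +d (so that sums a + b are kept). *)
Definition shifted_by (d : G) (x x' : V) : Prop :=
  match x, x' with
  | inr b, inr b' => val b - val b' = d
  | inl a, inl a' => val a - val a' = - d
  | _, _ => False
  end.

Lemma edge_label_in (u v : V) : gadj C u v -> edge_label u v \in C.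
Proof. by case: u => [a|b]; case: v. Qed.

Lemma walk_labels_sub (x : V) (s : seq V) :
  path (gadj C) x s -> {subset walk_labels x s <= C}.
Proof.
elim: s x => [|y s IHs] x //= /andP[xy ys] c.
by rewrite inE => /predU1P[->|]; [exact: edge_label_in | exact: IHs].
Qed.

Lemma shifted_by_adj (d : G) (x x' y y' : V) :
  shifted_by d x x' -> gadj C x y -> gadj C x' y' ->
  edge_label x y = edge_label x' y' -> shifted_by d y y'.
Proof.
case: x x' y y' => [a|b] [a'|b'] // [c|c] // [c'|c'] //= h _ _ e.
- rewrite -[d]opprK -h opprB; apply/eqP.
  by rewrite subr_eq addrAC -e (addrC (val a)) addrK.
- rewrite -h opprB; apply/eqP.
  by rewrite subr_eq addrAC (addrC (val b')) -e addrK.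
Qed.

Lemma shifted_by_last (d : G) (x x' : V) (s s' : seq V) :
  path (gadj C) x s -> path (gadj C) x' s' ->
  walk_labels x s = walk_labels x' s' ->
  shifted_by d x x' -> shifted_by d (last x s) (last x' s').
Proof.
elim: s s' x x' => [|y s IHs] [|y' s'] x x' //= /andP[xy ys] /andP[xy' ys'] [e es].
by move=> xx'; apply: IHs => //; exact: shifted_by_adj xx' xy xy' e.
Qed.

Lemma edge_label_inj (x y y' : V) :
  gadj C x y -> gadj C x y' -> edge_label x y = edge_label x y' -> y = y'.
Proof.
case: x y y' => [a|b] [c|c] // [c'|c'] //= _ _ e.
  by congr inr; apply: val_inj; exact: addrI e.
by congr inl; apply: val_inj; exact: addIr e.
Qed.

Lemma walk_labels_inj (x : V) (s s' : seq V) :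
  path (gadj C) x s -> path (gadj C) x s' ->
  walk_labels x s = walk_labels x s' -> s = s'.
Proof.
elim: s s' x => [|y s IHs] [|y' s'] x //= /andP[xy ys] /andP[xy' ys'] [e es].
have yy' := edge_label_inj xy xy' e; subst y'.
by rewrite (IHs s' y).
Qed.

Variable k : nat.

Lemma size_tuple_labels (t : k.+1.-tuple V) : size (tuple_labels t) = k.
Proof. by rewrite size_pairmap size_behead size_tuple. Qed.

Lemma tuple_labels_inj (t t' : k.+1.-tuple V) :
  is_walk C t -> is_walk C t' -> thead t = thead t' ->
  tuple_labels t = tuple_labels t' -> t = t'.
Proof.
rewrite /is_walk /tuple_labels => wt wt' ht e.
rewrite ht in wt e; apply: val_inj.
by rewrite [t]tuple_eta [t']tuple_eta /= ht (walk_labels_inj wt wt' e).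
Qed.

Lemma tuple_labels_diff (t t' : k.+1.-tuple V) (b1 b2 b1' b2' : B) :
  is_walk C t -> thead t = inr b1 -> last (thead t) (behead t) = inr b2 ->
  is_walk C t' -> thead t' = inr b1' -> last (thead t') (behead t') = inr b2' ->
  tuple_labels t = tuple_labels t' -> val b1 - val b2 = val b1' - val b2'.
Proof.
move=> wt ht lt wt' ht' lt' e.
have := shifted_by_last (d := val b1 - val b1') wt wt' e.
rewrite lt lt' ht ht' /= => /(_ erefl) shift.
by apply/eqP; rewrite subr_eq addrAC -addrA shift addrC subrK.
Qed.

End LabelledWalks.

Theorem lemma2p2 (G : zmodType) (k : nat) (A B C : {fset G}) (w : nat) :
  (0 < k)%N -> ~~ odd k ->
  C `<=` sumset A B ->
  (0 < w)%N ->
  (forall b b' : B, (w <= nwalks A B C k (inr b) (inr b'))%N) ->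
  (#|` diffset B B|%:R : rat) <= (#|` C| ^ k)%:R / w%:R.
Proof.
move=> _ _ _ w_gt0 many_walks.
have [rep repE] := diffset_section B.
pose P (d : diffset B B) (t : k.+1.-tuple (gvert A B)) :=
  [&& is_walk C t, thead t == inr (rep d).1 & last (thead t) (behead t) == inr (rep d).2].
pose S := [set p | P p.1 p.2].
have lowS : (#|` diffset B B| * w <= #|S|)%N.
  rewrite card_set_pairs cardfE -sum_nat_const.
  by apply: leq_sum => d _; exact: many_walks.
have upS : (#|S| <= #|` C| ^ k)%N.
  apply: (card_le_exp_of_inj (f := fun p => tuple_labels p.2)).
  - move=> [d t] [d' t']; rewrite !inE /= => /and3P[wt /eqP ht /eqP lt].
    move=> /and3P[wt' /eqP ht' /eqP lt'] /= e.
    have dd' : d = d'.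
      by apply: val_inj; rewrite !repE; exact: tuple_labels_diff wt ht lt wt' ht' lt' e.
    subst d'; congr pair; apply: (tuple_labels_inj wt wt') => //.
    by rewrite ht ht'.
  - by move=> p _; exact: size_tuple_labels.
  - by move=> [d t]; rewrite inE => /and3P[wt _ _]; exact: walk_labels_sub.
rewrite ler_pdivlMr ?ltr0n // -natrM ler_nat.
exact: leq_trans lowS upS.
Qed.
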